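(* Let $\mathcal{H}$, $C$, $T$, $f_1$, $f_2$, $f$ be as in the context, satisfying (A1), (A2), (A3), assume $\Omega\neq\emptyset$, and let $\{x^k\}$ be generated by the Algorithm. Then for every $x^*\in\Omega$ the sequence of real numbers $\{\|x^k-x^*\|\}_{k\in\mathbb{N}}$ is convergent.
   Context: $\mathcal{H}$ is a real Hilbert space with inner product $\langle\cdot,\cdot\rangle$ and norm $\|\cdot\|$; $C\subseteq\mathcal{H}$ is nonempty, closed and convex; $T:C\to C$ is nonexpansive ($\|T(x)-T(y)\|\le\|x-y\|$ for all $x,y\in C$), with fixed point set $Fix(T)$. $f_1,f_2:\mathcal{H}\times\mathcal{H}\to\mathbb{R}$, $f=f_1+f_2$, and $f_i(x,x)=0$ for all $x\in C$, $i=1,2$. $\partial_2 f_i(x,y)$ denotes the subdifferential of the convex function $f_i(x,\cdot)$ at $y$. Assumptions: (A1) for each $x\in C$, $f_1(x,\cdot)$ and $f_2(x,\cdot)$ are convex and subdifferentiable on an open set containing $C$, and $f(\cdot,x)$ is weakly upper semicontinuous on $C$. (A2) $f$ is pseudo-monotone on $C$: for all $x,y\in C$, $f(x,y)\ge0\Rightarrow f(y,x)\le 0$. (A3) either $\operatorname{int}C\neq\emptyset$, or for every $x\in C$ each $f_i(x,\cdot)$ is continuous at some point of $C$. $Sol(C,f)=\{x\in C: f(x,y)\ge 0\ \forall y\in C\}$; $\Omega=Sol(C,f)\cap Fix(T)$. Algorithm: choose $x^0\in C$, $\gamma\in(0,1)$ and real numbers $\beta_k>0$ ($k\ge0$) with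 $\sum_k\beta_k=+\infty$, $\sum_k\beta_k^2<+\infty$. For $k=0,1,\dots$: take $g_1^k\in\partial_2 f_1(x^k,x^k)$, $g_2^k\in\partial_2 f_2(x^k,x^k)$; set $\eta_k=\max\{\beta_k,\|g_1^k\|,\|g_2^k\|\}$, $\lambda_k=\beta_k/\eta_k$; $y^k=\arg\min\{\lambda_k f_1(x^k,y)+\tfrac12\|y-x^k\|^2 : y\in C\}$, $z^k=\arg\min\{\lambda_k f_2(x^k,y)+\tfrac12\|y-y^k\|^2 : y\in C\}$, $x^{k+1}=\gamma z^k+(1-\gamma)T(x^k)$. *)

From Stdlib Require Import Reals Lra.
Open Scope R_scope.

Record RHilbert := {
  hcar :> Type;
  hadd : hcar -> hcar -> hcar;
  hzero : hcar;
  hopp : hcar -> hcar;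
  hscal : R -> hcar -> hcar;
  hinner : hcar -> hcar -> R;
  hadd_assoc : forall x y z, hadd x (hadd y z) = hadd (hadd x y) z;
  hadd_comm : forall x y, hadd x y = hadd y x;
  hadd_zero : forall x, hadd x hzero = x;
  hadd_opp : forall x, hadd x (hopp x) = hzero;
  hscal_one : forall x, hscal 1 x = x;
  hscal_assoc : forall a b x, hscal a (hscal b x) = hscal (a * b) x;
  hscal_distr_l : forall a x y, hscal a (hadd x y) = hadd (hscal a x) (hscal a y);
  hscal_distr_r : forall a b x, hscal (a + b) x = hadd (hscal a x) (hscal b x);
  hinner_sym : forall x y, hinner x y = hinner y x;
  hinner_add_l : forall x y z, hinner (hadd x y) z = hinner x z + hinner y z;
  hinner_scal_l : forall a x y, hinner (hscal a x) y = a * hinner x y;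
  hinner_pos : forall x, 0 <= hinner x x;
  hinner_def : forall x, hinner x x = 0 -> x = hzero;
  hcomplete : forall u : nat -> hcar,
    (forall eps, eps > 0 -> exists N, forall n m, (n >= N)%nat -> (m >= N)%nat ->
        sqrt (hinner (hadd (u n) (hopp (u m))) (hadd (u n) (hopp (u m)))) < eps) ->
    exists l, forall eps, eps > 0 -> exists N, forall n, (n >= N)%nat ->
        sqrt (hinner (hadd (u n) (hopp l)) (hadd (u n) (hopp l))) < eps
}.

Arguments hadd {r}. Arguments hzero {r}. Arguments hopp {r}.
Arguments hscal {r}. Arguments hinner {r}.

Section Ops.
Context {H : RHilbert}.

Definition hsub (x y : H) : H := hadd x (hopp y).
Definition hnorm (x : H) : R := sqrt (hinner x x).

(** closed (norm topology; sequential closedness in a metric space) *)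
Definition hclosed_set (C : H -> Prop) : Prop :=
  forall (u : nat -> H) (l : H), (forall n, C (u n)) ->
    Un_cv (fun n => hnorm (hsub (u n) l)) 0 -> C l.

Definition hconvex_set (C : H -> Prop) : Prop :=
  forall x y t, C x -> C y -> 0 <= t <= 1 -> C (hadd (hscal t x) (hscal (1 - t) y)).

Definition hopen_set (U : H -> Prop) : Prop :=
  forall x, U x -> exists r, r > 0 /\ forall y, hnorm (hsub y x) < r -> U y.

Definition hinterior_nonempty (C : H -> Prop) : Prop :=
  exists x r, r > 0 /\ forall y, hnorm (hsub y x) < r -> C y.

Definition hnonexpansive_on (C : H -> Prop) (T : H -> H) : Prop :=
  (forall x, C x -> C (T x)) /\
  forall x y, C x -> C y -> hnorm (hsub (T x) (T y)) <= hnorm (hsub x y).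

Definition hFix (T : H -> H) (C : H -> Prop) (x : H) : Prop := C x /\ T x = x.

Definition hconvex_on (U : H -> Prop) (phi : H -> R) : Prop :=
  forall y z t, U y -> U z -> 0 <= t <= 1 -> U (hadd (hscal t y) (hscal (1 - t) z)) ->
    phi (hadd (hscal t y) (hscal (1 - t) z)) <= t * phi y + (1 - t) * phi z.

Definition hsubgrad (phi : H -> R) (y g : H) : Prop :=
  forall z, phi z >= phi y + hinner g (hsub z y).

Definition hsubdifferentiable_on (U : H -> Prop) (phi : H -> R) : Prop :=
  forall y, U y -> exists g, hsubgrad phi y g.

Definition hcontinuous_at (phi : H -> R) (y : H) : Prop :=
  forall eps, eps > 0 -> exists d, d > 0 /\
    forall z, hnorm (hsub z y) < d -> Rabs (phi z - phi y) < eps.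

Definition hweak_cv (u : nat -> H) (l : H) : Prop :=
  forall w, Un_cv (fun n => hinner (u n) w) (hinner l w).

Definition hweakly_usc_on (C : H -> Prop) (phi : H -> R) : Prop :=
  forall (u : nat -> H) (y : H), (forall n, C (u n)) -> C y -> hweak_cv u y ->
    forall eps, eps > 0 -> exists N, forall n, (n >= N)%nat -> phi (u n) <= phi y + eps.

Definition hpseudo_monotone_on (C : H -> Prop) (f : H -> H -> R) : Prop :=
  forall x y, C x -> C y -> f x y >= 0 -> f y x <= 0.

Definition hSol (C : H -> Prop) (f : H -> H -> R) (x : H) : Prop :=
  C x /\ forall y, C y -> f x y >= 0.

Definition his_argmin (C : H -> Prop) (phi : H -> R) (m : H) : Prop :=
  C m /\ forall y, C y -> phi m <= phi y.

End Ops.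

(* Each proximal step satisfies the three-point inequality of a strongly convex
   minimisation.  Adding the two, using the subgradient inequalities at x_k and
   f(x_k, x_star) <= 0 (pseudo-monotonicity, as x_star solves the equilibrium problem),
   gives ||z_k - x_star||^2 <= ||x_k - x_star||^2 + 5 beta_k^2, because the normalisation
   of lambda_k forces lambda_k ||g_i^k|| <= beta_k.  Averaging with T x_k preserves the
   bound since T is nonexpansive and fixes x_star.  Hence ||x_k - x_star||^2 is
   nonincreasing up to a summable error, and such a sequence converges. *)

From Stdlib Require Import Reals Lra.
Open Scope R_scope.

Lemma nonneg_of_linear_quadratic (A B : R) : 0 <= B ->
  (forall t, 0 < t <= 1 -> 0 <= t * A + t * t * B) -> 0 <= A.
Proof.
  intros HB Ht. destruct (Rle_or_lt 0 A) as [|HA]; [assumption|].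
  (* for this t, t * B <= -A, so the quadratic term cannot compensate t * A < 0 *)
  set (t := - A / (B - A + 1)).
  assert (Ht0 : 0 < t) by (unfold t; apply Rdiv_lt_0_compat; lra).
  assert (HtB : t * (B - A + 1) = - A) by (unfold t; field; lra).
  assert (Ht1 : t <= 1) by nra.
  specialize (Ht t (conj Ht0 Ht1)).
  nra.
Qed.

Lemma Un_cv_quasi_decreasing (a e : nat -> R) (M : R) :
  (forall n, 0 <= a n) -> (forall n, 0 <= e n) -> (forall n, sum_f_R0 e n <= M) ->
  (forall n, a (S n) <= a n + e n) -> exists L, Un_cv a L.
Proof.
  intros Ha He HM Hstep.
  set (s := fun n => sum_f_R0 e n).
  assert (Hs : Un_growing s) by (intro n; unfold s; simpl; specialize (He (S n)); lra).
  destruct (growing_cv s Hs) as [Ls HLs]; [exists M; intros r [n ->]; apply HM|].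
  set (c := fun n => a (S n) - s n).
  assert (Hc : Un_decreasing c) by (intro n; unfold c, s; simpl; specialize (Hstep (S n)); lra).
  assert (Hcb : has_lb c).
  { exists M. intros r [n ->]. unfold opp_seq, c. specialize (Ha (S n)). specialize (HM n). unfold s. lra. }
  destruct (decreasing_cv c Hc Hcb) as [Lc HLc].
  exists (Lc + Ls).
  apply (CV_shift a 1).
  apply Un_cv_ext with (fun n => c n + s n); [|now apply CV_plus].
  intro n. unfold c. rewrite Nat.add_1_r. ring.
Qed.

Lemma sum_f_R0_le_lim (e : nat -> R) (l : R) :
  (forall n, 0 <= e n) -> Un_cv (fun n => sum_f_R0 e n) l -> forall n, sum_f_R0 e n <= l.
Proof.
  intros He Hl. apply growing_ineq; [|exact Hl].
  intro n. simpl. specialize (He (S n)). lra.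
Qed.

Lemma Un_cv_sqrt (a : nat -> R) (L : R) :
  (forall n, 0 <= a n) -> Un_cv a L -> Un_cv (fun n => sqrt (a n)) (sqrt L).
Proof.
  intros Ha HL.
  assert (HL0 : 0 <= L).
  { apply Rle_cv_lim with (fun _ => 0) a; [assumption| |assumption].
    intros eps Heps. exists 0%nat. intros. unfold R_dist. rewrite Rminus_diag, Rabs_R0. lra. }
  exact (continuity_seq sqrt a L (continuity_pt_sqrt L HL0) HL).
Qed.

Lemma normalized_step_bound (b eta a : R) :
  0 < b -> b <= eta -> 0 <= a <= eta -> (b / eta) ^ 2 * a ^ 2 <= b ^ 2.
Proof.
  intros Hb Hbe Ha.
  assert (Hq : a / eta * eta = a) by (field; lra).
  assert (0 <= a / eta <= 1) by nra.
  replace ((b / eta) ^ 2 * a ^ 2) with ((b * (a / eta)) ^ 2) by (field; lra).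
  apply pow_incr. nra.
Qed.

Section HilbertEstimates.
Context {H : RHilbert}.

Lemma hinner_zero_l (c : H) : hinner hzero c = 0.
Proof. pose proof (hinner_add_l H hzero hzero c) as E. rewrite hadd_zero in E. lra. Qed.

Lemma hinner_opp_l (a c : H) : hinner (hopp a) c = - hinner a c.
Proof.
  pose proof (hinner_add_l H a (hopp a) c) as E. rewrite hadd_opp, hinner_zero_l in E. lra.
Qed.

Lemma hinner_add_r (a b c : H) : hinner c (hadd a b) = hinner c a + hinner c b.
Proof. rewrite !(hinner_sym H c). apply hinner_add_l. Qed.

Lemma hinner_scal_r (t : R) (a c : H) : hinner c (hscal t a) = t * hinner c a.
Proof. rewrite !(hinner_sym H c). apply hinner_scal_l. Qed.

Lemma hinner_opp_r (a c : H) : hinner c (hopp a) = - hinner c a.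
Proof. rewrite !(hinner_sym H c). apply hinner_opp_l. Qed.

Lemma hnorm_sq (a : H) : hnorm a ^ 2 = hinner a a.
Proof. apply pow2_sqrt, hinner_pos. Qed.

Ltac hinner_expand := unfold hsub in *;
  repeat rewrite ?hinner_add_l, ?hinner_add_r, ?hinner_opp_l, ?hinner_opp_r,
                 ?hinner_scal_l, ?hinner_scal_r in *.

Lemma hinner_young (c a : R) (u v : H) : 0 < c ->
  - 2 * a * hinner u v <= c * a ^ 2 * hinner u u + / c * hinner v v.
Proof.
  intros Hc.
  pose proof (hinner_pos H (hadd (hscal (c * a) u) v)) as P. hinner_expand.
  rewrite (hinner_sym H v u) in P.
  assert (E : / c * ((c * a) * ((c * a) * hinner u u) + (c * a) * hinner u v
                     + ((c * a) * hinner u v + hinner v v))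
              = c * a ^ 2 * hinner u u + 2 * a * hinner u v + / c * hinner v v)
    by (field; lra).
  pose proof (Rmult_le_pos _ _ (Rlt_le _ _ (Rinv_0_lt_compat c Hc)) P). lra.
Qed.

Lemma hinner_sub_swap (a b : H) : hinner (hsub a b) (hsub a b) = hinner (hsub b a) (hsub b a).
Proof. hinner_expand. rewrite (hinner_sym H a b). ring. Qed.

Lemma hinner_sub_chain (g z y x : H) :
  hinner g (hsub z x) = hinner g (hsub z y) + hinner g (hsub y x).
Proof. hinner_expand. ring. Qed.

Lemma hinner_sub_convex_comb (t : R) (z u s : H) :
  let w := hadd (hscal t z) (hscal (1 - t) u) in
  hinner (hsub w s) (hsub w s)
  = t * hinner (hsub z s) (hsub z s) + (1 - t) * hinner (hsub u s) (hsub u s)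
    - t * (1 - t) * hinner (hsub z u) (hsub z u).
Proof.
  hinner_expand. rewrite (hinner_sym H u z), (hinner_sym H s z), (hinner_sym H s u). ring.
Qed.

Lemma averaged_step_estimate (t : R) (z u v s : H) :
  0 <= t <= 1 -> hnorm (hsub u s) <= hnorm (hsub v s) ->
  let w := hadd (hscal t z) (hscal (1 - t) u) in
  hinner (hsub w s) (hsub w s)
  <= t * hinner (hsub z s) (hsub z s) + (1 - t) * hinner (hsub v s) (hsub v s).
Proof.
  intros Ht Huv w. unfold w. rewrite hinner_sub_convex_comb.
  assert (hinner (hsub u s) (hsub u s) <= hinner (hsub v s) (hsub v s))
    by (apply sqrt_le_0; try apply hinner_pos; exact Huv).
  pose proof (hinner_pos H (hsub z u)).
  assert (0 <= t * (1 - t)) by nra.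
  nra.
Qed.

Lemma normalized_step_sq_bound (b : R) (g1 g2 : H) : 0 < b ->
  let lam := b / Rmax b (Rmax (hnorm g1) (hnorm g2)) in
  0 < lam /\ lam ^ 2 * hinner g1 g1 <= b ^ 2 /\ lam ^ 2 * hinner g2 g2 <= b ^ 2.
Proof.
  intros Hb lam. rewrite <- !hnorm_sq.
  pose proof (Rmax_l b (Rmax (hnorm g1) (hnorm g2))).
  pose proof (Rmax_r b (Rmax (hnorm g1) (hnorm g2))).
  pose proof (Rmax_l (hnorm g1) (hnorm g2)). pose proof (Rmax_r (hnorm g1) (hnorm g2)).
  pose proof (sqrt_pos (hinner g1 g1)). pose proof (sqrt_pos (hinner g2 g2)).
  split; [apply Rdiv_lt_0_compat; lra|].
  split; apply normalized_step_bound; unfold hnorm in *; lra.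
Qed.

Lemma prox_three_point (C U : H -> Prop) (phi : H -> R) (lam : R) (p m : H) :
  hconvex_set C -> (forall w, C w -> U w) -> hconvex_on U phi -> 0 <= lam ->
  his_argmin C (fun w => lam * phi w + / 2 * hnorm (hsub w p) ^ 2) m ->
  forall w, C w ->
  lam * phi m + / 2 * hinner (hsub m p) (hsub m p) + / 2 * hinner (hsub w m) (hsub w m)
  <= lam * phi w + / 2 * hinner (hsub w p) (hsub w p).
Proof.
  intros HCv HCU Hphi Hlam [Hm Hmin] w Hw.
  (* first-order optimality of m, obtained by comparing with the points of [m, w] *)
  assert (Hopt : 0 <= lam * (phi w - phi m) + hinner (hsub m p) (hsub w m)).
  { apply (nonneg_of_linear_quadratic _ (/ 2 * hinner (hsub w m) (hsub w m))).
    { pose proof (hinner_pos H (hsub w m)). lra. }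
    intros t Ht.
    set (wt := hadd (hscal t w) (hscal (1 - t) m)).
    assert (Cwt : C wt) by (apply HCv; auto; lra).
    pose proof (Hmin wt Cwt) as Emin. cbv beta in Emin. rewrite !hnorm_sq in Emin.
    pose proof (Hphi w m t (HCU w Hw) (HCU m Hm) ltac:(lra) (HCU wt Cwt)) as Ecv. fold wt in Ecv.
    assert (Ewt : hinner (hsub wt p) (hsub wt p) = hinner (hsub m p) (hsub m p)
        + 2 * t * hinner (hsub m p) (hsub w m) + t * t * hinner (hsub w m) (hsub w m)).
    { unfold wt. hinner_expand.
      rewrite (hinner_sym H m w), (hinner_sym H p w), (hinner_sym H p m). ring. }
    rewrite Ewt in Emin.
    assert (lam * phi wt <= lam * (t * phi w + (1 - t) * phi m))
      by (apply Rmult_le_compat_l; lra).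
    nra. }
  assert (Ew : hinner (hsub w p) (hsub w p) = hinner (hsub m p) (hsub m p)
     + 2 * hinner (hsub m p) (hsub w m) + hinner (hsub w m) (hsub w m)).
  { hinner_expand. rewrite (hinner_sym H m w), (hinner_sym H p w), (hinner_sym H p m). ring. }
  lra.
Qed.

Lemma two_prox_step_estimate (C U : H -> Prop) (phi1 phi2 : H -> R) (lam b : R)
    (x y z xs g1 g2 : H) :
  hconvex_set C -> (forall w, C w -> U w) -> hconvex_on U phi1 -> hconvex_on U phi2 ->
  C xs -> 0 < lam -> phi1 x = 0 -> phi2 x = 0 ->
  hsubgrad phi1 x g1 -> hsubgrad phi2 x g2 ->
  lam ^ 2 * hinner g1 g1 <= b ^ 2 -> lam ^ 2 * hinner g2 g2 <= b ^ 2 ->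
  phi1 xs + phi2 xs <= 0 ->
  his_argmin C (fun w => lam * phi1 w + / 2 * hnorm (hsub w x) ^ 2) y ->
  his_argmin C (fun w => lam * phi2 w + / 2 * hnorm (hsub w y) ^ 2) z ->
  hinner (hsub z xs) (hsub z xs) <= hinner (hsub x xs) (hsub x xs) + 5 * b ^ 2.
Proof.
  intros HCv HCU Hphi1 Hphi2 Cxs Hlam Hx1 Hx2 Hg1 Hg2 Hb1 Hb2 Hxs Hy Hz.
  pose proof (prox_three_point C U phi1 lam x y HCv HCU Hphi1 ltac:(lra) Hy xs Cxs) as Ty.
  pose proof (prox_three_point C U phi2 lam y z HCv HCU Hphi2 ltac:(lra) Hz xs Cxs) as Tz.
  assert (Sy : lam * hinner g1 (hsub y x) <= lam * phi1 y).
  { pose proof (Hg1 y) as G. rewrite Hx1 in G. nra. }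
  assert (Sz : lam * hinner g2 (hsub z y) + lam * hinner g2 (hsub y x) <= lam * phi2 z).
  { pose proof (Hg2 z) as G. rewrite Hx2, (hinner_sub_chain g2 z y x) in G. nra. }
  pose proof (hinner_young 2 lam g1 (hsub y x) ltac:(lra)).
  pose proof (hinner_young 2 lam g2 (hsub y x) ltac:(lra)).
  pose proof (hinner_young 1 lam g2 (hsub z y) ltac:(lra)).
  rewrite (hinner_sub_swap z xs), (hinner_sub_swap x xs).
  assert (lam * phi1 xs + lam * phi2 xs <= 0) by nra.
  rewrite Rinv_1 in *. lra.
Qed.

End HilbertEstimates.

Theorem proposition3p1
  (H : RHilbert) (C : H -> Prop) (T : H -> H) (f1 f2 : H -> H -> R)
  (HCne : exists c, C c) (HCcl : hclosed_set C) (HCcv : hconvex_set C)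
  (HT : hnonexpansive_on C T)
  (Hf1 : forall x, C x -> f1 x x = 0) (Hf2 : forall x, C x -> f2 x x = 0)
  (HA1a : forall x, C x -> exists U : H -> Prop, hopen_set U /\ (forall y, C y -> U y) /\
      hconvex_on U (f1 x) /\ hconvex_on U (f2 x) /\
      hsubdifferentiable_on U (f1 x) /\ hsubdifferentiable_on U (f2 x))
  (HA1b : forall x, C x -> hweakly_usc_on C (fun y => f1 y x + f2 y x))
  (HA2 : hpseudo_monotone_on C (fun x y => f1 x y + f2 x y))
  (HA3 : hinterior_nonempty C \/
         (forall x, C x -> (exists y, C y /\ hcontinuous_at (f1 x) y) /\
                           (exists y, C y /\ hcontinuous_at (f2 x) y)))
  (HOm : exists xs, hSol C (fun x y => f1 x y + f2 x y) xs /\ hFix T C xs)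
  (x y z g1 g2 : nat -> H) (gamma : R) (beta : nat -> R)
  (Hx0 : C (x 0%nat)) (Hgamma : 0 < gamma < 1)
  (Hbeta : forall k, beta k > 0)
  (Hbeta_div : cv_infty (fun n => sum_f_R0 beta n))
  (Hbeta_sq : exists l, Un_cv (fun n => sum_f_R0 (fun k => (beta k)^2) n) l)
  (Hg1 : forall k, hsubgrad (f1 (x k)) (x k) (g1 k))
  (Hg2 : forall k, hsubgrad (f2 (x k)) (x k) (g2 k))
  (Hy : forall k,
     let lam := beta k / Rmax (beta k) (Rmax (hnorm (g1 k)) (hnorm (g2 k))) in
     his_argmin C (fun w => lam * f1 (x k) w + / 2 * (hnorm (hsub w (x k)))^2) (y k))
  (Hz : forall k,
     let lam := beta k / Rmax (beta k) (Rmax (hnorm (g1 k)) (hnorm (g2 k))) in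
     his_argmin C (fun w => lam * f2 (x k) w + / 2 * (hnorm (hsub w (y k)))^2) (z k))
  (Hxs : forall k, x (S k) = hadd (hscal gamma (z k)) (hscal (1 - gamma) (T (x k)))) :
  forall xs, hSol C (fun x y => f1 x y + f2 x y) xs -> hFix T C xs ->
    exists l, Un_cv (fun k => hnorm (hsub (x k) xs)) l.
Proof.
  (* Closedness of C, (A1) beyond convexity, (A3), and the divergence of the beta_k
     sum are only needed for the weak convergence of the iterates, not here. *)
  intros xs [Cxs Hsol] [_ Txs]. destruct HT as [HTC HTn].
  assert (Cx : forall k, C (x k)).
  { induction k as [|k IH]; [assumption|]. rewrite Hxs.
    apply HCcv; [apply (Hz k) | apply HTC, IH | lra]. }
  set (a := fun k => hinner (hsub (x k) xs) (hsub (x k) xs)).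
  assert (Hfejer : forall k, a (S k) <= a k + 5 * beta k ^ 2).
  { intro k. pose proof (Hy k) as Hyk. pose proof (Hz k) as Hzk. cbv zeta in Hyk, Hzk.
    destruct (normalized_step_sq_bound (beta k) (g1 k) (g2 k) (Hbeta k)) as (Hlam & Hb1 & Hb2).
    destruct (HA1a (x k) (Cx k)) as (U & _ & HCU & Hc1 & Hc2 & _).
    assert (Hf : f1 (x k) xs + f2 (x k) xs <= 0).
    { pose proof (HA2 xs (x k) Cxs (Cx k) (Hsol (x k) (Cx k))). lra. }
    pose proof (two_prox_step_estimate C U _ _ _ _ _ _ _ xs _ _ HCcv HCU Hc1 Hc2 Cxs Hlam
                  (Hf1 _ (Cx k)) (Hf2 _ (Cx k)) (Hg1 k) (Hg2 k) Hb1 Hb2 Hf Hyk Hzk).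
    pose proof (HTn (x k) xs (Cx k) Cxs) as HTk. rewrite Txs in HTk.
    unfold a. rewrite Hxs.
    eapply Rle_trans; [apply (averaged_step_estimate gamma _ _ _ _ ltac:(lra) HTk)|]. nra. }
  destruct Hbeta_sq as [l Hl].
  destruct (Un_cv_quasi_decreasing a (fun k => 5 * beta k ^ 2) (5 * l)) as [L HL].
  - intro k. apply hinner_pos.
  - intro k. pose proof (pow2_ge_0 (beta k)). lra.
  - intro n.
    replace (sum_f_R0 _ n) with (5 * sum_f_R0 (fun k => beta k ^ 2) n)
      by (rewrite scal_sum; apply sum_eq; intros; ring).
    apply Rmult_le_compat_l; [lra|].
    apply (sum_f_R0_le_lim (fun k => beta k ^ 2)); [intro k; apply pow2_ge_0 | exact Hl].
  - exact Hfejer.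
  - exists (sqrt L). apply Un_cv_sqrt; [intro k; apply hinner_pos | exact HL].
Qed.
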